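(* Let a group $G$ act uniformly equicontinuously on a cofinite graph $\Gamma$, let $\{R\mid R\in I\}$ be a fundamental system of $G$-invariant compatible cofinite entourages of $\Gamma$, and give $G$ the uniformity with fundamental system $\{N_R\mid R\in I\}$. Then the action map $G\times\Gamma\to\Gamma$, $(g,x)\mapsto g\cdot x$, is uniformly continuous (with the product uniformity on $G\times\Gamma$).
   Context: A graph $\Gamma$ is a set $\Gamma=V(\Gamma)\sqcup E(\Gamma)$ with maps $s,t\colon E\to V$ and a fixed-point-free involution $e\mapsto\overline e$ with $s(\overline e)=t(e)$, $t(\overline e)=s(e)$. An equivalence relation $R$ on $\Gamma$ is compatible if $R\subseteq (V\times V)\cup(E\times E)$, $(e,e')\in R$ implies $(s(e),s(e')),(t(e),t(e')),(\overline e,\overline{e'})\in R$, and $(e,\overline e)\notin R$. A cofinite entourage is an entourage that is an equivalence relation with finitely many classes. A cofinite graph is a graph with a Hausdorff uniformity in which compatible cofinite entourages form a fundamental system. A group $G$ acts on $\Gamma$ if it acts on the set $\Gamma$ preserving vertices and edges, commuting with $s,t,\overline{\phantom e}$, and there is a $G$-invariant orientation. The action is uniformly equicontinuous if for each entourage $W$ there is an entourage $V$ with $(g\times g)[V]\subseteq W$ for all $g\in G$. $R$ is $G$-invariant if $(g\times g)[R]\subseteq R$ for all $g$. $N_R=\{(g,h)\in G\times G:(g\cdot x,h\cdot x)\in R\ \forall x\in\Gamma\}$; these are cofinite congruences on $G$ forming a fundamental system of a uniformity on $G$. *)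

From HB Require Import structures.
From mathcomp Require Import all_boot all_algebra.
From mathcomp Require Import boolp classical_sets cardinality topology.
Set Implicit Arguments. Unset Strict Implicit. Unset Printing Implicit Defensive.
Local Open Scope classical_set_scope.

Definition is_group (G : Type) (mul : G -> G -> G) (one : G) (inv : G -> G) : Prop :=
  [/\ forall a b c, mul a (mul b c) = mul (mul a b) c,
      forall a, mul one a = a /\ mul a one = a
    & forall a, mul (inv a) a = one /\ mul a (inv a) = one].

(* Graph structure on a carrier T = V ⊔ E: [isV x] says x is a vertex,
   otherwise x is an edge.  s, t, bar are only constrained on edges. *)
Record graph (T : Type) := Graph {
  isV : T -> Prop;
  src : T -> T;
  tgt : T -> T;
  bar : T -> T }.

Definition is_graph (T : Type) (Γ : graph T) : Prop :=
  forall e, ~ isV Γ e ->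
    [/\ isV Γ (src Γ e) /\ isV Γ (tgt Γ e), ~ isV Γ (bar Γ e),
        bar Γ (bar Γ e) = e, bar Γ e <> e
      & src Γ (bar Γ e) = tgt Γ e /\ tgt Γ (bar Γ e) = src Γ e].

Definition equivalence_rel (T : Type) (R : set (T * T)) : Prop :=
  [/\ forall x, R (x, x),
      forall x y, R (x, y) -> R (y, x)
    & forall x y z, R (x, y) -> R (y, z) -> R (x, z)].

Definition cofinite_equiv (T : Type) (R : set (T * T)) : Prop :=
  equivalence_rel R /\ finite_set [set [set y | R (x, y)] | x in [set: T]].

Definition compatible (T : Type) (Γ : graph T) (R : set (T * T)) : Prop :=
  [/\ forall x y, R (x, y) -> (isV Γ x /\ isV Γ y) \/ (~ isV Γ x /\ ~ isV Γ y),
      forall e e', ~ isV Γ e -> R (e, e') ->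
        [/\ R (src Γ e, src Γ e'), R (tgt Γ e, tgt Γ e') & R (bar Γ e, bar Γ e')]
    & forall e, ~ isV Γ e -> ~ R (e, bar Γ e)].

Definition cofinite_graph (T : uniformType) (Γ : graph T) : Prop :=
  [/\ is_graph Γ, hausdorff_space T &
      forall W, entourage W ->
        exists R, [/\ entourage R, compatible Γ R, cofinite_equiv R & R `<=` W]].

(* A group action on the graph (with a G-invariant orientation). *)
Definition graph_action (G T : Type) (mul : G -> G -> G) (one : G)
    (Γ : graph T) (act : G -> T -> T) : Prop :=
  [/\ forall x, act one x = x,
      forall g h x, act (mul g h) x = act g (act h x),
      forall g x, isV Γ (act g x) <-> isV Γ x,
      forall g e, ~ isV Γ e ->
        [/\ act g (src Γ e) = src Γ (act g e), act g (tgt Γ e) = tgt Γ (act g e)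
          & act g (bar Γ e) = bar Γ (act g e)]
    & exists Eplus : set T,
        [/\ forall e, Eplus e -> ~ isV Γ e,
            forall e, ~ isV Γ e -> (Eplus e <-> ~ Eplus (bar Γ e))
          & forall g e, Eplus e -> Eplus (act g e)]].

Definition unif_equicontinuous (G : Type) (T : uniformType) (act : G -> T -> T) : Prop :=
  forall W, entourage W -> exists V, entourage V /\
    forall g x y, V (x, y) -> W (act g x, act g y).

Definition G_invariant (G T : Type) (act : G -> T -> T) (R : set (T * T)) : Prop :=
  forall g x y, R (x, y) -> R (act g x, act g y).

Definition N_ (G T : Type) (act : G -> T -> T) (R : set (T * T)) : set (G * G) :=
  [set gh | forall x, R (act gh.1 x, act gh.2 x)].

Definition G_entourage (G T : Type) (act : G -> T -> T) (I : set (set (T * T)))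
    (U : set (G * G)) : Prop :=
  exists2 R, I R & N_ act R `<=` U.

(* Uniform continuity of the action map G × Γ -> Γ for the product uniformity:
   the preimage of every entourage of Γ is an entourage of G × Γ, i.e. contains
   a product U × V of an entourage U of G and an entourage V of Γ. *)
Definition action_unif_continuous (G : Type) (T : uniformType)
    (act : G -> T -> T) (I : set (set (T * T))) : Prop :=
  forall W, entourage W ->
    exists U V, [/\ G_entourage act I U, entourage V &
      forall g h x y, U (g, h) -> V (x, y) -> W (act g x, act h y)].

From mathcomp Require Import all_boot all_algebra.
From mathcomp Require Import boolp classical_sets cardinality topology.
Local Open Scope classical_set_scope.

(* If [N_R (g, h)] and [R (x, y)], then [g x] is [R]-close to [g y] by invariance,
   and [g y] is [R]-close to [h y] by definition of [N_R]; transitivity of [R]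
   concludes.  So [N_R × R] is mapped into [R] by the action, and as the [R] in [I]
   are cofinal among the entourages of the graph, the action is uniformly
   continuous. *)

Lemma N_act_subrel (G T : Type) (act : G -> T -> T) (R : set (T * T)) :
    G_invariant act R -> (forall x y z, R (x, y) -> R (y, z) -> R (x, z)) ->
  forall g h x y, N_ act R (g, h) -> R (x, y) -> R (act g x, act h y).
Proof.
move=> invR trR g h x y NRgh Rxy.
apply: (trR _ (act g y)); first exact: invR.
exact: NRgh.
Qed.

Theorem mainTheorem7 (G : Type) (mul : G -> G -> G) (one : G) (inv : G -> G)
    (T : uniformType) (Γ : graph T) (act : G -> T -> T) (I : set (set (T * T))) :
  is_group mul one inv ->
  cofinite_graph Γ ->
  graph_action mul one Γ act ->
  unif_equicontinuous act ->
  (forall R, I R ->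
     [/\ entourage R, G_invariant act R, compatible Γ R & cofinite_equiv R]) ->
  (forall W, entourage W -> exists2 R, I R & R `<=` W) ->
  action_unif_continuous act I.
Proof.
move=> _ _ _ _ HI cofinal_I W entW.
have [R IR RW] := cofinal_I W entW.
have [entR invR _ [[_ _ trR] _]] := HI R IR.
exists (N_ act R), R; split => //; first by exists R.
move=> g h x y NRgh Rxy; apply: RW.
exact: N_act_subrel NRgh Rxy.
Qed.
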